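(* Let $X$ and $Y$ be continuous random variables with marginal distribution functions $F_1,F_2$ and copula $C$, and suppose $Y=f(X)$ almost surely, where $f$ is a periodic function, continuous and differentiable over the range of $X$. Let $M(u,v)=\min(u,v)$, $W(u,v)=\max(u+v-1,0)$, $\Pi(u,v)=uv$. Then at every global maximum point $(x_1,y_{\max})$ of $f$, with $u_1=F_1(x_1)$, $v_1=F_2(y_{\max})$, one has $C(u_1,v_1)=M(u_1,v_1)=W(u_1,v_1)=\Pi(u_1,v_1)=u_1$, and at every global minimum point $(x_2,y_{\min})$ of $f$, with $u_2=F_1(x_2)$, $v_2=F_2(y_{\min})$, one has $C(u_2,v_2)=M(u_2,v_2)=W(u_2,v_2)=\Pi(u_2,v_2)=0$.
   Context: The copula $C$ of continuous random variables $X,Y$ with joint distribution $H$ and marginals $F_1,F_2$ is the unique function $C:[0,1]^2\to[0,1]$ with $H(x,y)=P(X\le x,Y\le y)=C(F_1(x),F_2(y))$. *)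

From HB Require Import structures.
From mathcomp Require Import all_boot all_order all_algebra.
From mathcomp Require Import all_classical all_reals all_analysis.
Set Implicit Arguments. Unset Strict Implicit. Unset Printing Implicit Defensive.
Import Order.TTheory GRing.Theory Num.Theory.
Import numFieldNormedType.Exports.
Local Open Scope classical_set_scope.
Local Open Scope ring_scope.

(* real-valued distribution function F(x) = P(X <= x) (library [cdf] is \bar R-valued) *)
Definition dfun d (T : measurableType d) (R : realType) (P : probability T R)
  (X : {RV P >-> R}) (x : R) : R := fine (cdf X x).

Definition joint_dfun d (T : measurableType d) (R : realType) (P : probability T R)
  (X Y : {RV P >-> R}) (x y : R) : R :=
  fine (P ([set w | X w <= x] `&` [set w | Y w <= y])).

Definition continuous_RV d (T : measurableType d) (R : realType) (P : probability T R)
  (X : {RV P >-> R}) : Prop := continuous (dfun X).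

(* (bivariate) copula: a function [0,1]^2 -> [0,1] (values outside [0,1]^2 are irrelevant),
   grounded, with uniform margins, and 2-increasing *)
Definition copula (R : realType) (C : R -> R -> R) : Prop :=
  [/\ (forall u v, 0 <= u <= 1 -> 0 <= v <= 1 -> 0 <= C u v <= 1),
      (forall u, 0 <= u <= 1 -> C u 0 = 0 /\ C 0 u = 0),
      (forall u, 0 <= u <= 1 -> C u 1 = u /\ C 1 u = u) &
      (forall u1 u2 v1 v2, 0 <= u1 -> u1 <= u2 -> u2 <= 1 ->
          0 <= v1 -> v1 <= v2 -> v2 <= 1 ->
          0 <= C u2 v2 - C u2 v1 - C u1 v2 + C u1 v1)].

Definition copula_of d (T : measurableType d) (R : realType) (P : probability T R)
  (X Y : {RV P >-> R}) (C : R -> R -> R) : Prop :=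
  copula C /\ forall x y : R, joint_dfun X Y x y = C (dfun X x) (dfun Y y).

Definition Mcop (R : realType) (u v : R) : R := Num.min u v.
Definition Wcop (R : realType) (u v : R) : R := Num.max (u + v - 1) 0.
Definition Picop (R : realType) (u v : R) : R := u * v.

From HB Require Import structures.
From mathcomp Require Import all_boot all_order all_algebra.
From mathcomp Require Import all_classical all_reals all_analysis.
Import Order.TTheory GRing.Theory Num.Theory.
Import numFieldNormedType.Exports.
Local Open Scope classical_set_scope.
Local Open Scope ring_scope.

(* At a global maximum x1 of f we have Y <= f x1 almost surely, so
   F2 (f x1) = 1 and C (u, 1) = u by the uniform margins of C.  At a global
   minimum x2 we have Y >= f x2 almost surely, so F2 vanishes to the left of
   f x2, hence at f x2 by continuity, and C (u, 0) = 0 by groundedness.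
   On the edges v = 1 and v = 0 of the unit square all copulas agree, in
   particular M, W and Pi. *)

Lemma left_const_continuous_eq (R : realFieldType) (g : R -> R) (y c : R) :
  {for y, continuous g} -> (forall x, x < y -> g x = c) -> g y = c.
Proof.
move=> gy gc; have gy_left := cvg_at_left_filter gy.
have gc_left : g x @[x --> y^'-] --> c.
  by apply: cvg_near_cst; near=> x; apply: gc; near: x; exact: nbhs_left_lt.
by rewrite -(cvg_lim (@Rhausdorff R) gy_left) (cvg_lim (@Rhausdorff R) gc_left).
Unshelve. all: by end_near. Qed.

Section distribution_function.
Context {d : measure_display} {T : measurableType d} {R : realType}.
Context {P : probability T R}.
Variable Y : {RV P >-> R}.

Lemma dfunE y : dfun Y y = fine (P (Y @^-1` `]-oo, y])).
Proof. by []. Qed.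

Lemma dfun01 y : 0 <= dfun Y y <= 1.
Proof.
have := cdf_ge0 Y y; have := cdf_le1 Y y; rewrite /dfun.
by case: (cdf Y y) => [r| |] //=; rewrite !lee_fin => -> ->.
Qed.

Lemma dfun_ae_le y : {ae P, forall w, Y w <= y} -> dfun Y y = 1.
Proof.
move=> Yle; have mA : measurable (Y @^-1` `]-oo, y]) by exact: measurable_funPTI.
rewrite dfunE -[Y @^-1` _]setCK (probability_setC _ (measurableC mA)).
rewrite (_ : P _ = 0) ?sube0 //; apply/negligibleP; first exact: measurableC.
by apply: negligibleS Yle => w /= + Yw; apply; rewrite in_itv /=.
Qed.

Lemma dfun_ae_ge x y : {ae P, forall w, y <= Y w} -> x < y -> dfun Y x = 0.
Proof.
move=> Yge xy; rewrite dfunE (_ : P _ = 0) //.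
apply/negligibleP; first exact: measurable_funPTI.
apply: negligibleS Yge => w /=; rewrite in_itv /= => Ywx yYw.
by have := le_lt_trans (le_trans yYw Ywx) xy; rewrite ltxx.
Qed.

Lemma continuous_dfun_ae_ge y :
  continuous_RV Y -> {ae P, forall w, y <= Y w} -> dfun Y y = 0.
Proof.
move=> cY Yge; apply: left_const_continuous_eq; first exact: cY.
by move=> x; exact: dfun_ae_ge.
Qed.

End distribution_function.

Lemma copula_MWPi_top_edge (R : realType) (C : R -> R -> R) (u : R) :
  copula C -> 0 <= u <= 1 ->
  [/\ C u 1 = Mcop u 1, Mcop u 1 = Wcop u 1, Wcop u 1 = Picop u 1
    & Picop u 1 = u].
Proof.
move=> [_ _ Cmargin _] u01; have /andP[u_ge0 u_le1] := u01.
have [-> _] := Cmargin u u01.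
rewrite /Mcop /Wcop /Picop mulr1 addrK (min_idPl u_le1) (max_idPl u_ge0).
by split.
Qed.

Lemma copula_MWPi_bottom_edge (R : realType) (C : R -> R -> R) (u : R) :
  copula C -> 0 <= u <= 1 ->
  [/\ C u 0 = Mcop u 0, Mcop u 0 = Wcop u 0, Wcop u 0 = Picop u 0
    & Picop u 0 = 0].
Proof.
move=> [_ Cground _ _] u01; have /andP[u_ge0 u_le1] := u01.
have [-> _] := Cground u u01.
rewrite /Mcop /Wcop /Picop mulr0 addr0 (min_idPr u_ge0).
by rewrite (max_idPr _) ?subr_le0.
Qed.

Theorem corollary1 (d : measure_display) (T : measurableType d) (R : realType)
  (P : probability T R) (X Y : {RV P >-> R}) (C : R -> R -> R) (f : R -> R) :
  continuous_RV X -> continuous_RV Y ->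
  copula_of X Y C ->
  {ae P, forall w, Y w = f (X w)} ->
  (exists p : R, 0 < p /\ periodic f p) ->
  (forall w, {for X w, continuous f} /\ derivable f (X w) 1) ->
  (forall x1 : R, (forall x, f x <= f x1) ->
     let u1 := dfun X x1 in let v1 := dfun Y (f x1) in
     [/\ C u1 v1 = Mcop u1 v1, Mcop u1 v1 = Wcop u1 v1,
         Wcop u1 v1 = Picop u1 v1 & Picop u1 v1 = u1]) /\
  (forall x2 : R, (forall x, f x2 <= f x) ->
     let u2 := dfun X x2 in let v2 := dfun Y (f x2) in
     [/\ C u2 v2 = Mcop u2 v2, Mcop u2 v2 = Wcop u2 v2,
         Wcop u2 v2 = Picop u2 v2 & Picop u2 v2 = 0]).
Proof.
move=> _ cY [copC _] Yf _ _; split=> [x1 f_le | x2 f_ge] /=.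
- have Yle : {ae P, forall w, Y w <= f x1} by apply: filterS Yf => w ->.
  rewrite (dfun_ae_le _ _ Yle).
  exact: copula_MWPi_top_edge (dfun01 X x1).
- have Yge : {ae P, forall w, f x2 <= Y w} by apply: filterS Yf => w ->.
  rewrite (continuous_dfun_ae_ge _ _ cY Yge).
  exact: copula_MWPi_bottom_edge (dfun01 X x2).
Qed.
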